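(* Let $\lambda>0$ and let $L_0,S_0\in\mathbb{R}^{n\times n}$. Suppose the program \[ \text{minimize } \|L\|_*+\lambda\|S\|_1\quad\text{subject to}\quad L+S=M_0 \] with $M_0=L_0+S_0$ has the unique solution $(L_0,S_0)$. Let $S_0'$ be a trimmed version of $S_0$ and $M_0'=L_0+S_0'$. Then the same program with input $M_0'$ in place of $M_0$ is exact, i.e. its solution is $(L_0,S_0')$.
   Context: $\|L\|_*$ is the nuclear norm (sum of singular values) and $\|S\|_1=\sum_{ij}|S_{ij}|$. A matrix $S'$ is a trimmed version of $S$ if $\mathrm{supp}(S')\subset\mathrm{supp}(S)$ and $S'_{ij}=S_{ij}$ whenever $S'_{ij}\neq0$ (i.e. $S'$ is obtained by setting some entries of $S$ to zero). *)

From HB Require Import structures.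
From mathcomp Require Import all_boot all_order all_algebra.
From mathcomp Require Import boolp.
Set Implicit Arguments. Unset Strict Implicit. Unset Printing Implicit Defensive.
Import Order.TTheory GRing.Theory Num.Theory.
Local Open Scope ring_scope.

Definition orthogonal_mx (R : rcfType) (n : nat) (U : 'M[R]_n) : Prop :=
  U *m U^T = 1%:M.

Definition is_svd (R : rcfType) (n : nat) (A : 'M[R]_n) (s : 'rV[R]_n) : Prop :=
  (forall i, 0 <= s 0 i) /\
  exists U V : 'M[R]_n, [/\ orthogonal_mx U, orthogonal_mx V &
                           A = U *m diag_mx s *m V^T].

(* A chosen vector of singular values (an SVD always exists; the multiset of
   singular values is unique, so the sum below does not depend on the choice). *)
Definition singular_values (R : rcfType) (n : nat) (A : 'M[R]_n) : 'rV[R]_n :=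
  match pselect (exists s, is_svd A s) with
  | left P => projT1 (cid P)
  | right _ => 0
  end.

Definition nuclear_norm (R : rcfType) (n : nat) (A : 'M[R]_n) : R :=
  \sum_i singular_values A 0 i.

Definition l1_norm (R : rcfType) (n : nat) (S : 'M[R]_n) : R :=
  \sum_i \sum_j `|S i j|.

Definition pcp_obj (R : rcfType) (n : nat) (lam : R) (L S : 'M[R]_n) : R :=
  nuclear_norm L + lam * l1_norm S.

Definition unique_solution (R : rcfType) (n : nat) (lam : R) (M L0 S0 : 'M[R]_n)
  : Prop :=
  L0 + S0 = M /\
  forall L S : 'M[R]_n, L + S = M -> (L, S) <> (L0, S0) ->
    pcp_obj lam L0 S0 < pcp_obj lam L S.

Definition trimmed (R : rcfType) (n : nat) (S' S : 'M[R]_n) : Prop :=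
  forall i j, S' i j = S i j \/ S' i j = 0.

From HB Require Import structures.
From mathcomp Require Import all_boot all_order all_algebra.
Import Order.TTheory GRing.Theory Num.Theory.
Set Implicit Arguments. Unset Strict Implicit. Unset Printing Implicit Defensive.
Local Open Scope ring_scope.

(* Put D := S0 - S0'. If (L, S) did at least as well as (L0, S0') for
   M0' = L0 + S0', then (L, S + D) would be feasible for M0 with objective at
   most obj(L, S) + lam ||D||_1 by the triangle inequality, whereas
   obj(L0, S0) = obj(L0, S0') + lam ||D||_1 exactly, because S0' and D have
   disjoint supports. This contradicts the uniqueness of (L0, S0). *)

Section PcpObjective.

Variables (R : rcfType) (n : nat).
Implicit Types (lam : R) (L S T D : 'M[R]_n).

Lemma ler_l1_normD S D : l1_norm (S + D) <= l1_norm S + l1_norm D.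
Proof.
rewrite /l1_norm -big_split /=; apply: ler_sum => i _.
rewrite -big_split /=; apply: ler_sum => j _; rewrite mxE; exact: ler_normD.
Qed.

Lemma l1_norm_trimmed T S :
  trimmed T S -> l1_norm S = l1_norm T + l1_norm (S - T).
Proof.
move=> hT; rewrite /l1_norm -big_split /=; apply: eq_bigr => i _.
rewrite -big_split /=; apply: eq_bigr => j _; rewrite !mxE.
by case: (hT i j) => ->; rewrite ?subrr ?subr0 normr0 ?addr0 ?add0r.
Qed.

Lemma ler_pcp_objDr lam L S D : 0 <= lam ->
  pcp_obj lam L (S + D) <= pcp_obj lam L S + lam * l1_norm D.
Proof.
move=> hlam; rewrite /pcp_obj -addrA lerD2l -mulrDr.
by rewrite ler_wpM2l // ler_l1_normD.
Qed.

Lemma pcp_obj_trimmed lam L T S : trimmed T S ->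
  pcp_obj lam L S = pcp_obj lam L T + lam * l1_norm (S - T).
Proof. by move=> hT; rewrite /pcp_obj (l1_norm_trimmed hT) mulrDr addrA. Qed.

End PcpObjective.

Theorem theorem2p1 (R : rcfType) (n : nat) (lam : R) (L0 S0 S0' : 'M[R]_n) :
  0 < lam ->
  unique_solution lam (L0 + S0) L0 S0 ->
  trimmed S0' S0 ->
  unique_solution lam (L0 + S0') L0 S0'.
Proof.
move=> hlam [_ uniq0] hS0'; split=> // L S hLS hne.
rewrite ltNge; apply/negP => hle.
set D := S0 - S0'.
have feasD : L + (S + D) = L0 + S0.
  by rewrite addrA hLS -addrA subrKC.
have neD : (L, S + D) <> (L0, S0).
  case=> eL eS; apply: hne; congr pair => //.
  by rewrite -(addrK D S) eS /D opprB subrKC.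
have := uniq0 _ _ feasD neD; rewrite ltNge => /negP; apply.
rewrite (pcp_obj_trimmed _ _ hS0') -/D.
apply: le_trans (ler_pcp_objDr _ _ _ (ltW hlam)) _.
by rewrite lerD2r.
Qed.
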